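(* In the setting described in the context, suppose $F$ is strongly convex with respect to $\|\cdot\|_L$ with convexity parameter $\mu>0$. Then $$H(x,T(x))-F^*\leq\gamma_\mu(F(x)-F^* )\qquad\text{for all }x\in\mathrm{dom}\,F,$$ where $\gamma_\mu=1-\frac{\mu}{4}$ if $\mu\leq2$ and $\gamma_\mu=\frac1\mu$ otherwise.
   Context: Let $U\in\mathbf{R}^{N\times N}$ be a column permutation of the $N\times N$ identity matrix, partitioned as $U=[U_1,\dots,U_n]$ with $U_i\in\mathbf{R}^{N\times N_i}$, $\sum_iN_i=N$. For $x\in\mathbf{R}^N$ write $x^{(i)}=U_i^Tx$. Each $\mathbf{R}^{N_i}$ carries the norm $\|t\|_{(i)}=\langle B_it,t\rangle^{1/2}$ and dual norm $\|t\|_{(i)}^*=\langle B_i^{-1}t,t\rangle^{1/2}$ with $B_i$ positive definite. Consider minimizing $F(x)=f(x)+\Psi(x)$ over $\mathbf{R}^N$, where $f$ is convex and differentiable with $\|\nabla_if(x+U_it)-\nabla_if(x)\|_{(i)}^*\leq L_i\|t\|_{(i)}$ for all $x,t,i$ (constants $L_i>0$, $\nabla_if(x)=U_i^T\nabla f(x)$), and $\Psi(x)=\sum_i\Psi_i(x^{(i)})$ with each $\Psi_i$ proper closed convex. The problem has a minimizer; $F^*$ is the optimal value. Let $\|x\|_L=(\sum_iL_i\|x^{(i)}\|_{(i)}^2)^{1/2}$. $F$ is strongly convex w.r.t. a norm $\|\cdot\|$ with parameter $\mu>0$ if $F(x)\geq F(y)+\langle F'(y),x-y\rangle+\frac\mu2\|x-y\|^2$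 for all $x,y\in\mathrm{dom}\,F$ and every subgradient $F'(y)$ of $F$ at $y$. Define $T^{(i)}(x)=\arg\min_{t\in\mathbf{R}^{N_i}}\{\langle\nabla_if(x),t\rangle+\frac{L_i}{2}\|t\|_{(i)}^2+\Psi_i(x^{(i)}+t)\}$, $T(x)=\sum_iU_iT^{(i)}(x)$, and $H(x,T)=f(x)+\langle\nabla f(x),T\rangle+\frac12\|T\|_L^2+\Psi(x+T)$. *)

From HB Require Import structures.
From mathcomp Require Import all_boot all_order all_algebra.
From mathcomp Require Import all_classical all_reals all_analysis.
Set Implicit Arguments. Unset Strict Implicit. Unset Printing Implicit Defensive.
Import Order.TTheory GRing.Theory Num.Theory.
Import numFieldNormedType.Exports.
Local Open Scope ring_scope.
Local Open Scope classical_set_scope.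

Section Defs.
Variable R : realType.

Definition dotv (k : nat) (u v : 'cV[R]_k) : R := \sum_(j < k) u j 0 * v j 0.

Definition posdef (k : nat) (B : 'M[R]_k) : Prop :=
  B^T = B /\ forall t : 'cV[R]_k, t != 0 -> 0 < dotv (B *m t) t.

Definition blk_norm (k : nat) (B : 'M[R]_k) (t : 'cV[R]_k) : R :=
  Num.sqrt (dotv (B *m t) t).
Definition blk_dnorm (k : nat) (B : 'M[R]_k) (t : 'cV[R]_k) : R :=
  Num.sqrt (dotv (invmx B *m t) t).

Definition convex_fun (k : nat) (f : 'cV[R]_k -> R) : Prop :=
  forall (x y : 'cV[R]_k) (l : R), 0 <= l <= 1 ->
    f (l *: x + (1 - l) *: y) <= l * f x + (1 - l) * f y.

Definition proper_fun (k : nat) (P : 'cV[R]_k -> \bar R) : Prop :=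
  (forall t, P t != -oo%E) /\ exists t, (P t < +oo)%E.
Definition closed_fun (k : nat) (P : 'cV[R]_k -> \bar R) : Prop :=
  closed [set p : 'cV[R]_k * R | (P p.1 <= p.2%:E)%E].
Definition econvex_fun (k : nat) (P : 'cV[R]_k -> \bar R) : Prop :=
  forall (x y : 'cV[R]_k) (l : R), 0 < l < 1 ->
    (P (l *: x + (1 - l) *: y)%R <= l%:E * P x + (1 - l)%R%:E * P y)%E.
Definition proper_closed_convex (k : nat) (P : 'cV[R]_k -> \bar R) : Prop :=
  [/\ proper_fun P, closed_fun P & econvex_fun P].

Definition subgradient (k : nat) (F : 'cV[R]_k -> \bar R) (y g : 'cV[R]_k) : Prop :=
  forall z, (F y + (dotv g (z - y))%:E <= F z)%E.

Definition domF (k : nat) (F : 'cV[R]_k -> \bar R) : set 'cV[R]_k :=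
  [set x | (F x < +oo)%E].

Definition strongly_convex (k : nat) (F : 'cV[R]_k -> \bar R)
    (nrm : 'cV[R]_k -> R) (mu : R) : Prop :=
  forall x y, domF F x -> domF F y -> forall g, subgradient F y g ->
    (F y + (dotv g (x - y) + mu / 2 * nrm (x - y) ^+ 2)%:E <= F x)%E.

Variables (n : nat) (Ns : 'I_n -> nat).
Local Notation N := (\sum_(i < n) Ns i)%N.

Definition Ublk (U : 'M[R]_N) (i : 'I_n) : 'M[R]_(N, Ns i) := submxrow U i.
Definition xblk (U : 'M[R]_N) (i : 'I_n) (x : 'cV[R]_N) : 'cV[R]_(Ns i) :=
  (Ublk U i)^T *m x.
Definition normL (U : 'M[R]_N) (B : forall i, 'M[R]_(Ns i)) (L : 'I_n -> R)
    (x : 'cV[R]_N) : R :=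
  Num.sqrt (\sum_(i < n) L i * blk_norm (B i) (xblk U i x) ^+ 2).
Definition PsiF (U : 'M[R]_N) (Psi : forall i, 'cV[R]_(Ns i) -> \bar R)
    (x : 'cV[R]_N) : \bar R :=
  (\sum_(i < n) Psi i (xblk U i x))%E.
Definition FF (U : 'M[R]_N) (f : 'cV[R]_N -> R)
    (Psi : forall i, 'cV[R]_(Ns i) -> \bar R) (x : 'cV[R]_N) : \bar R :=
  ((f x)%:E + PsiF U Psi x)%E.
Definition Fstar (U : 'M[R]_N) (f : 'cV[R]_N -> R)
    (Psi : forall i, 'cV[R]_(Ns i) -> \bar R) : \bar R :=
  ereal_inf (range (FF U f Psi)).
Definition Tvec (U : 'M[R]_N) (Tb : forall i, 'cV[R]_(Ns i)) : 'cV[R]_N :=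
  \sum_(i < n) Ublk U i *m Tb i.
(* objective defining T^(i)(x), with grad = nabla f(x) *)
Definition blk_obj (U : 'M[R]_N) (B : forall i, 'M[R]_(Ns i)) (L : 'I_n -> R)
    (Psi : forall i, 'cV[R]_(Ns i) -> \bar R) (grad x : 'cV[R]_N) (i : 'I_n)
    (t : 'cV[R]_(Ns i)) : \bar R :=
  ((dotv (xblk U i grad) t + L i / 2 * blk_norm (B i) t ^+ 2)%:E
     + Psi i (xblk U i x + t)%R)%E.
Definition HH (U : 'M[R]_N) (B : forall i, 'M[R]_(Ns i)) (L : 'I_n -> R)
    (f : 'cV[R]_N -> R) (Psi : forall i, 'cV[R]_(Ns i) -> \bar R)
    (grad x T : 'cV[R]_N) : \bar R :=
  ((f x + dotv grad T + 1 / 2 * normL U B L T ^+ 2)%:E + PsiF U Psi (x + T)%R)%E.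

End Defs.

Definition gamma_mu (R : realType) (mu : R) : R :=
  if mu <= 2 then 1 - mu / 4 else 1 / mu.

(* Compare T(x) with the step d = a (x^* - x), a = min(1, mu/2), towards a
   minimiser x^*.  Blockwise optimality of T(x) gives H(x, T(x)) <= H(x, d);
   convexity of f (through its tangent at x) and of Psi bounds H(x, d) by
   a F^* + (1 - a) F(x) + a^2/2 ||x - x^*||_L^2, and strong convexity at x^*,
   where 0 is a subgradient, gives mu/2 ||x - x^*||_L^2 <= F(x) - F^*.  Hence
   H(x, T(x)) - F^* <= (1 - a + a^2/mu) [F(x) - F^*], and 1 - a + a^2/mu is
   exactly gamma_mu. *)
From HB Require Import structures.
From mathcomp Require Import all_boot all_order all_algebra.
From mathcomp Require Import all_classical all_reals all_analysis.
From mathcomp Require Import ring lra.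
From mathcomp Require Import fingroup perm.
Import Order.TTheory GRing.Theory Num.Theory.
Import numFieldNormedType.Exports.
Local Open Scope ring_scope.
Local Open Scope classical_set_scope.

Section InnerProduct.
Variable R : realType.
Implicit Type a : R.

Lemma dotvE k (u v : 'cV[R]_k) : dotv u v = (u^T *m v) 0 0.
Proof. by rewrite /dotv !mxE; apply: eq_bigr => j _; rewrite !mxE. Qed.

Lemma dotv_mulmx k m (u : 'cV[R]_k) (A : 'M[R]_(k, m)) (w : 'cV[R]_m) :
  dotv u (A *m w) = dotv (A^T *m u) w.
Proof. by rewrite !dotvE trmx_mul trmxK mulmxA. Qed.

Lemma dotv_sumr k (I : finType) (u : 'cV[R]_k) (F : I -> 'cV[R]_k) :
  dotv u (\sum_i F i) = \sum_i dotv u (F i).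
Proof. by rewrite dotvE mulmx_sumr summxE; apply: eq_bigr => i _; rewrite dotvE. Qed.

Lemma dotvZl k a (u v : 'cV[R]_k) : dotv (a *: u) v = a * dotv u v.
Proof. by rewrite !dotvE linearZ /= -scalemxAl mxE. Qed.

Lemma dotvZr k a (u v : 'cV[R]_k) : dotv u (a *: v) = a * dotv u v.
Proof. by rewrite !dotvE -scalemxAr mxE. Qed.

Lemma dotv0l k (v : 'cV[R]_k) : dotv 0 v = 0.
Proof. by rewrite dotvE trmx0 mul0mx mxE. Qed.

Lemma blk_normZ_sqr k (B : 'M[R]_k) a (v : 'cV[R]_k) :
  blk_norm B (a *: v) ^+ 2 = a ^+ 2 * blk_norm B v ^+ 2.
Proof.
rewrite /blk_norm -scalemxAr dotvZl dotvZr mulrA -expr2 sqrtrM ?sqr_ge0 //.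
by rewrite sqrtr_sqr exprMn real_normK ?num_real.
Qed.

End InnerProduct.

Section ConvexDifferentiable.
Context {R : realType} {k : nat} {f : 'cV[R]_k -> R}.
Hypothesis f_convex : convex_fun f.

Lemma convex_fun_slope_le (x d : 'cV[R]_k) (h : R) : 0 < h <= 1 ->
  h^-1 * (f (x + h *: d) - f x) <= f (x + d) - f x.
Proof.
case/andP=> h_gt0 h_le1; rewrite mulrC ler_pdivrMr //.
have := f_convex (x + d) x h; rewrite (ltW h_gt0) h_le1 => /(_ isT).
have -> : h *: (x + d) + (1 - h) *: x = x + h *: d.
  by apply/matrixP => i j; rewrite !mxE; ring.
lra.
Qed.

(* The difference quotients along 0^'+ are bounded by f (x + d) - f x, and they
   converge to the directional derivative. *)
Lemma convex_fun_diff_le (x d : 'cV[R]_k) : differentiable f x ->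
  f x + 'd f x d <= f (x + d).
Proof.
move=> fx; rewrite -deriveE // -lerBrDl.
have Df : h^-1 *: ((f \o shift x) (h *: d) - f x) @[h --> 0^'+] --> 'D_d f x.
  apply: cvg_trans (diff_derivable (v := d) fx).
  by apply: cvg_app; apply: within_subset => h /= /lt0r_neq0.
rewrite -(cvg_lim _ Df) //; apply: limr_le; first by apply/cvg_ex; exists ('D_d f x).
near=> h; rewrite /= [h *: d + x]addrC; apply: convex_fun_slope_le.
by apply/andP; split; near: h; [exact: nbhs_right_gt | exact: nbhs_right_le].
Unshelve. all: by end_near.
Qed.

End ConvexDifferentiable.

Lemma perm_mx_orthogonal {R : nzRingType} {k} {U : 'M[R]_k} : is_perm_mx U ->
  U^T *m U = 1%:M /\ U *m U^T = 1%:M.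
Proof.
case/is_perm_mxP => s ->; rewrite tr_perm_mx -!perm_mxM.
by rewrite fingroup.mulVg fingroup.mulgV perm_mx1.
Qed.

Lemma ereal_inf_range_min {R : realType} {T : Type} {h : T -> \bar R} {xs : T} :
  (forall y, (h xs <= h y)%E) -> ereal_inf (range h) = h xs.
Proof.
move=> xs_min; apply/eqP; rewrite eq_le; apply/andP; split.
  by apply: ge_ereal_inf; exists (h xs) => //; exists xs.
by apply: le_ereal_inf_tmp => _ [y _ <-].
Qed.

Section Blocks.
Context {R : realType} {n : nat} {Ns : 'I_n -> nat}.
Local Notation N := (\sum_(i < n) Ns i)%N.
Context {U : 'M[R]_N}.

Lemma xblkD i (u v : 'cV[R]_N) : xblk U i (u + v) = xblk U i u + xblk U i v.
Proof. exact: mulmxDr. Qed.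

Hypotheses (U_tU : U^T *m U = 1%:M) (U_Ut : U *m U^T = 1%:M).

Lemma xblk_Tvec (T : forall i, 'cV[R]_(Ns i)) i : xblk U i (Tvec U T) = T i.
Proof.
rewrite /xblk /Tvec /Ublk -mul_mxrow_mxcol submxrowK tr_submxrow submxcol_mul.
by rewrite mulmxA U_tU mul1mx mxcolK.
Qed.

Lemma Tvec_xblk (v : 'cV[R]_N) : Tvec U (fun i => xblk U i v) = v.
Proof.
rewrite /Tvec /xblk /Ublk -mul_mxrow_mxcol submxrowK.
have -> : \mxcol_j ((submxrow U j)^T *m v) = \mxcol_j submxcol (U^T *m v) j.
  by apply: eq_mxcol => j; rewrite tr_submxrow submxcol_mul.
by rewrite submxcolK mulmxA U_Ut mul1mx.
Qed.

Lemma dotv_blocks (g d : 'cV[R]_N) :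
  dotv g d = \sum_i dotv (xblk U i g) (xblk U i d).
Proof.
rewrite -{1}(Tvec_xblk d) /Tvec dotv_sumr.
by apply: eq_bigr => i _; rewrite dotv_mulmx.
Qed.

Context {B : forall i, 'M[R]_(Ns i)} {L : 'I_n -> R}.
Hypothesis L_ge0 : forall i, 0 <= L i.

Lemma normL_sqr (v : 'cV[R]_N) :
  normL U B L v ^+ 2 = \sum_i L i * blk_norm (B i) (xblk U i v) ^+ 2.
Proof. by rewrite sqr_sqrtr // sumr_ge0 // => i _; rewrite mulr_ge0 ?sqr_ge0. Qed.

Lemma normLZ_sqr a (v : 'cV[R]_N) :
  normL U B L (a *: v) ^+ 2 = a ^+ 2 * normL U B L v ^+ 2.
Proof.
rewrite !normL_sqr mulr_sumr; apply: eq_bigr => i _.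
by rewrite /xblk -scalemxAr blk_normZ_sqr mulrCA.
Qed.

End Blocks.

Section Objective.
Context {R : realType} {n : nat} {Ns : 'I_n -> nat}.
Local Notation N := (\sum_(i < n) Ns i)%N.
Context {U : 'M[R]_N} {B : forall i, 'M[R]_(Ns i)} {L : 'I_n -> R}.
Context {f : 'cV[R]_N -> R} {gradf : 'cV[R]_N -> 'cV[R]_N}.
Context {Psi : forall i, 'cV[R]_(Ns i) -> \bar R}.
Hypothesis Psi_neqNy : forall i t, Psi i t != -oo%E.
Hypothesis Psi_convex : forall i, econvex_fun (Psi i).

Lemma PsiF_convex (x y : 'cV[R]_N) (l : R) : 0 < l <= 1 ->
  (PsiF U Psi (l *: x + (1 - l) *: y)
     <= l%:E * PsiF U Psi x + (1 - l)%:E * PsiF U Psi y)%E.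
Proof.
case/andP=> l_gt0; rewrite le_eqVlt => /predU1P[->|l_lt1].
  by rewrite subrr scale1r scale0r addr0 mul1e mul0e adde0.
have Psi_def z : {in predT &, forall i j,
    Psi i (xblk U i z) +? Psi j (xblk U j z)}%E.
  by move=> i j _ _; apply: ltninfty_adde_def; rewrite inE /= ltNye.
rewrite /PsiF !fin_num_sume_distrr // -big_split /=.
apply: lee_sum => i _; rewrite /xblk mulmxDr -!scalemxAr.
by apply: Psi_convex; rewrite l_gt0.
Qed.

Lemma FF_fin_num {x : 'cV[R]_N} :
  domF (FF U f Psi) x -> FF U f Psi x \is a fin_num.
Proof.
rewrite /domF /= fin_numE => /lt_eqF ->.
rewrite andbT /FF /PsiF adde_eq_ninfty negb_or /= esum_eqNy.
by apply/existsPn => i; rewrite (negbTE (Psi_neqNy _ _)) andbF.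
Qed.

Hypotheses (U_tU : U^T *m U = 1%:M) (U_Ut : U *m U^T = 1%:M).
Hypothesis L_ge0 : forall i, 0 <= L i.

Lemma HH_Tvec (g x : 'cV[R]_N) (T : forall i, 'cV[R]_(Ns i)) :
  HH U B L f Psi g x (Tvec U T) =
    ((f x)%:E + \sum_i blk_obj U B L Psi g x (T i))%E.
Proof.
rewrite /HH /blk_obj /PsiF (dotv_blocks U_Ut) normL_sqr // big_split /=.
under eq_bigr do rewrite xblk_Tvec //.
under [X in 1 / 2 * X]eq_bigr do rewrite xblk_Tvec //.
under [X in (_ + X)%E]eq_bigr do rewrite xblkD xblk_Tvec //.
rewrite sumEFin addeA -EFinD; congr (_%:E + _)%E.
rewrite big_split /= mulr_sumr -addrA; congr (_ + (_ + _)).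
by apply: eq_bigr => i _; rewrite mul1r mulrCA mulrA.
Qed.

Lemma HH_Tvec_le {g x : 'cV[R]_N} {T : forall i, 'cV[R]_(Ns i)} :
  (forall i (t : 'cV[R]_(Ns i)),
     (blk_obj U B L Psi g x (T i) <= blk_obj U B L Psi g x t)%E) ->
  forall d, (HH U B L f Psi g x (Tvec U T) <= HH U B L f Psi g x d)%E.
Proof.
move=> T_min d; rewrite -(Tvec_xblk U_Ut d) !HH_Tvec.
by apply: leeD2l; apply: lee_sum => i _; exact: T_min.
Qed.

Hypothesis f_diff :
  forall x, differentiable f x /\ forall h, 'd f x h = dotv (gradf x) h.
Hypothesis f_convex : convex_fun f.

Lemma HH_le_convex_comb {x y : 'cV[R]_N} {Fx Fy a : R} :
  FF U f Psi x = Fx%:E -> FF U f Psi y = Fy%:E -> 0 < a <= 1 ->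
  (HH U B L f Psi (gradf x) x (a *: (y - x))
     <= (a * Fy + (1 - a) * Fx + a ^+ 2 / 2 * normL U B L (x - y) ^+ 2)%:E)%E.
Proof.
move=> FFx FFy a01.
have PsiFE z Fz : FF U f Psi z = Fz%:E -> PsiF U Psi z = (Fz - f z)%:E.
  by rewrite /FF; case: (PsiF U Psi z) => // r [<-]; rewrite addrAC subrr add0r.
have tangent : dotv (gradf x) (y - x) <= f y - f x.
  have [fx dfx] := f_diff x.
  rewrite lerBrDl -dfx.
  by have := convex_fun_diff_le f_convex x (y - x) fx; rewrite [x + _]addrC subrK.
have Psi_step : (PsiF U Psi (x + a *: (y - x))
    <= (a * (Fy - f y) + (1 - a) * (Fx - f x))%:E)%E.
  have -> : x + a *: (y - x) = a *: y + (1 - a) *: x.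
    by apply/matrixP => i j; rewrite !mxE; ring.
  by rewrite EFinD !EFinM -PsiFE // -PsiFE //; exact: PsiF_convex.
have norm_step :
    normL U B L (a *: (y - x)) ^+ 2 = a ^+ 2 * normL U B L (x - y) ^+ 2.
  by rewrite -opprB scalerN -scaleNr normLZ_sqr // sqrrN.
rewrite /HH; apply: le_trans (leeD2l _ Psi_step) _; rewrite -EFinD lee_fin.
rewrite dotvZr norm_step.
have := ler_wpM2l (ltW (proj1 (andP a01))) tangent.
lra.
Qed.

End Objective.

Lemma gamma_muE (R : realType) (mu : R) : 0 < mu ->
  gamma_mu mu = 1 - Num.min 1 (mu / 2) + Num.min 1 (mu / 2) ^+ 2 / mu.
Proof.
move=> mu_gt0; rewrite /gamma_mu; case: ifP => mu_le2.
  by rewrite min_r ?ler_pdivrMr ?mul1r //; field; rewrite gt_eqF.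
rewrite min_l; last by rewrite ler_pdivlMr // mul1r ltW // ltNge mu_le2.
by rewrite expr1n subrr add0r.
Qed.

Lemma gamma_mu_ge {R : realType} {mu D S : R} : 0 < mu -> mu / 2 * S <= D ->
  (1 - Num.min 1 (mu / 2)) * D + Num.min 1 (mu / 2) ^+ 2 / 2 * S
    <= gamma_mu mu * D.
Proof.
move=> mu_gt0 SD; rewrite gamma_muE //; set a := Num.min 1 (mu / 2).
have : a ^+ 2 / 2 * S <= a ^+ 2 / mu * D.
  rewrite (_ : a ^+ 2 / 2 = a ^+ 2 / mu * (mu / 2)); last by field; rewrite gt_eqF.
  by rewrite -mulrA ler_wpM2l // divr_ge0 ?sqr_ge0 ?ltW.
lra.
Qed.

Theorem lemma5 (R : realType) (n : nat) (Ns : 'I_n -> nat)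
  (U : 'M[R]_(\sum_(i < n) Ns i)) (HU : is_perm_mx U)
  (B : forall i : 'I_n, 'M[R]_(Ns i)) (HB : forall i, posdef (B i))
  (L : 'I_n -> R) (HL : forall i, 0 < L i)
  (f : 'cV[R]_(\sum_(i < n) Ns i) -> R)
  (gradf : 'cV[R]_(\sum_(i < n) Ns i) -> 'cV[R]_(\sum_(i < n) Ns i))
  (Hdiff : forall x, differentiable f x /\ forall h, 'd f x h = dotv (gradf x) h)
  (Hfconv : convex_fun f)
  (HLip : forall x i (t : 'cV[R]_(Ns i)),
     blk_dnorm (B i) (xblk U i (gradf (x + Ublk U i *m t)) - xblk U i (gradf x))
       <= L i * blk_norm (B i) t)
  (Psi : forall i : 'I_n, 'cV[R]_(Ns i) -> \bar R)
  (HPsi : forall i, proper_closed_convex (Psi i))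
  (Hmin : exists xs, forall x, (FF U f Psi xs <= FF U f Psi x)%E)
  (mu : R) (Hmu : 0 < mu)
  (Hsc : strongly_convex (FF U f Psi) (normL U B L) mu) :
  forall x, domF (FF U f Psi) x ->
  forall Tx : forall i : 'I_n, 'cV[R]_(Ns i),
    (forall i (t : 'cV[R]_(Ns i)),
       (blk_obj U B L Psi (gradf x) x (Tx i) <= blk_obj U B L Psi (gradf x) x t)%E) ->
  (HH U B L f Psi (gradf x) x (Tvec U Tx) - Fstar U f Psi
     <= (gamma_mu mu)%:E * (FF U f Psi x - Fstar U f Psi))%E.
Proof.
move=> x domx Tx Tx_min.
have [U_tU U_Ut] := perm_mx_orthogonal HU.
have L_ge0 i : 0 <= L i := ltW (HL i).
have Psi_neqNy i t : Psi i t != -oo%E by case: (HPsi i) => -[+ _] _ _; apply.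
have Psi_convex i : econvex_fun (Psi i) by case: (HPsi i).
have [xs xs_min] := Hmin.
have domxs : domF (FF U f Psi) xs := le_lt_trans (xs_min x) domx.
have FFx := esym (fineK (FF_fin_num Psi_neqNy domx)).
have FFs := esym (fineK (FF_fin_num Psi_neqNy domxs)).
set Fx := fine _ in FFx; set Fs := fine _ in FFs.
have strong : mu / 2 * normL U B L (x - xs) ^+ 2 <= Fx - Fs.
  have zero_subgrad : subgradient (FF U f Psi) xs 0.
    by move=> z; rewrite dotv0l adde0.
  have := Hsc x xs domx domxs 0 zero_subgrad.
  by rewrite FFx FFs dotv0l add0r lerBrDl.
set a := Num.min 1 (mu / 2).
have a01 : 0 < a <= 1 by rewrite lt_min ltr01 divr_gt0 //= ge_min lexx.
have H_le := le_trans (HH_Tvec_le U_tU U_Ut L_ge0 Tx_min (a *: (xs - x)))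
  (HH_le_convex_comb Psi_neqNy Psi_convex L_ge0 Hdiff Hfconv FFx FFs a01).
rewrite /Fstar (ereal_inf_range_min xs_min) FFx FFs -EFinB -EFinM leeBlDr //.
apply: le_trans H_le _; rewrite -EFinD lee_fin.
have := gamma_mu_ge Hmu strong; rewrite -/a.
lra.
Qed.
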